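(* Let $f:[0,T]\times\mathbb{R}^d\times U\to\mathbb{R}^d$ be the dynamics of an individual agent, $U\subset\mathbb{R}^m$, and let $\alpha:\mathbb{R}\to\mathbb{R}$ be a strictly increasing smooth function with $\alpha(0)=0$. Let $\mathcal{H}(s,\rho)$ be a real-valued functional of time $s$ and of a probability density $\rho$ on $\mathbb{R}^d$, with partial time derivative $\partial_s\mathcal{H}$ and Fréchet derivative $\delta_\rho\mathcal{H}(s,\rho)$ (a function of $x\in\mathbb{R}^d$) with respect to $\rho$. For $s\ge 0$ and a density $\rho$ define $$\mathcal{K}_{\mathrm{CBF}}(s,\rho)=\Big\{ q ~:~ \int_{\mathbb{R}^d} \nabla \delta_\rho \mathcal{H}(s,\rho)(x)\cdot f(s,x,q(x))\,\rho(x)\,dx \geq -\partial_s \mathcal{H}(s,\rho) -\alpha\big(\mathcal{H}(s,\rho)\big)\Big\}.$$ Assume the swarm adopts a policy function $q(s,\cdot)$ so that its density $\rho(s,\cdot)$ evolves according to the continuity equation $$\partial_s \rho(s,x) + \nabla \cdot \big(\rho(s,x)f(s,x,q(s,x))\big) = 0,\qquad \rho(0,x)=\rho_0(x).$$ Then the condition $$\frac{d}{ds}\mathcal{H}(s,\rho(s,\cdot))\geq -\alpha\big(\mathcal{H}(s,\rho(s,\cdot))\big)\quad\text{for all } s\geq 0$$ is equivalent to $$q(s,\cdot) \in \mathcal{K}_{\mathrm{CBF}}(s,\rho(s,\cdot))\quad \text{for all } s\geq 0.$$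
   Context: Mean-field setting: a population of agents in $\mathbb{R}^d$, each following $\partial_s z(s)=f(s,z(s),u(s))$, is described by its distribution $\rho(s,\cdot)$ (identified with its density); all agents use the same feedback policy $u=q(s,z)$. $\nabla$ denotes the gradient in $x$ and $\nabla\cdot$ the divergence in $x$. Standing regularity assumptions of the paper: the continuity equation is well-posed and everything is smooth enough for the differential calculus (including the chain rule $\frac{d}{ds}\mathcal{H}(s,\rho(s,\cdot))=\partial_s\mathcal{H}+\int \delta_\rho\mathcal{H}\,\partial_s\rho\,dx$), and $\rho(s,\cdot)$ decays fast enough at infinity (e.g. is compactly supported, as ensured by a fast-decaying $\rho_0$ and Lipschitz $q(s,\cdot)$) so that integration by parts produces no boundary terms. *)

From HB Require Import structures.
From mathcomp Require Import all_boot all_order all_algebra.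
From mathcomp Require Import all_classical all_reals all_analysis.
Set Implicit Arguments. Unset Strict Implicit. Unset Printing Implicit Defensive.
Import Order.TTheory GRing.Theory Num.Theory.
Import numFieldNormedType.Exports.
Local Open Scope classical_set_scope.
Local Open Scope ring_scope.

Section Defs.
Variable R : realType.

Definition ebasis (d : nat) (i : 'I_d) : 'rV[R]_d := delta_mx 0 i.

Definition partial (d : nat) (i : 'I_d) (g : 'rV[R]_d -> R) (x : 'rV[R]_d) : R :=
  'D_(ebasis i) g x.

Definition grad (d : nat) (g : 'rV[R]_d -> R) (x : 'rV[R]_d) : 'rV[R]_d :=
  \row_i partial i g x.

Definition div (d : nat) (F : 'rV[R]_d -> 'rV[R]_d) (x : 'rV[R]_d) : R :=
  \sum_(i < d) partial i (fun y => F y 0 i) x.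

Definition dotv (d : nat) (a b : 'rV[R]_d) : R := \sum_(i < d) a 0 i * b 0 i.

(* Integral over R^d w.r.t. Lebesgue measure, written as the iterated
   Lebesgue integral over the coordinates (x_0, then (x_1,...)). *)
Fixpoint intRd (d : nat) : ('rV[R]_d -> R) -> R :=
  match d return ('rV[R]_d -> R) -> R with
  | 0 => fun g => g 0
  | n.+1 => fun g =>
      Rintegral (@lebesgue_measure R) setT
        (fun t : R => intRd (fun y : 'rV[R]_n => g (row_mx (t%:M : 'rV[R]_1) y)))
  end.

Definition dsH (d : nat) (H : R -> ('rV[R]_d -> R) -> R) (s : R) (r : 'rV[R]_d -> R) : R :=
  derive1 (fun t => H t r) s.

Definition K_CBF (d m : nat) (U : set 'rV[R]_m)
  (f : R -> 'rV[R]_d -> 'rV[R]_m -> 'rV[R]_d)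
  (H : R -> ('rV[R]_d -> R) -> R)
  (dH : R -> ('rV[R]_d -> R) -> 'rV[R]_d -> R)
  (alpha : R -> R) (s : R) (r : 'rV[R]_d -> R) : set ('rV[R]_d -> 'rV[R]_m) :=
  [set q | (forall x, U (q x)) /\
     intRd (fun x => dotv (grad (dH s r) x) (f s x (q x)) * r x)
       >= - dsH H s r - alpha (H s r)].

End Defs.

From HB Require Import structures.
From mathcomp Require Import all_boot all_order all_algebra.
From mathcomp Require Import all_classical all_reals all_analysis.
From mathcomp Require Import ring lra.
Import Order.TTheory GRing.Theory Num.Theory.
Import numFieldNormedType.Exports.
Local Open Scope classical_set_scope.
Local Open Scope ring_scope.

(* By the chain rule, the continuity equation and an integration by parts,
   d/ds H(s, rho(s)) = d_s H(s, rho(s)) + int grad(delta_rho H) . f rho dx,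
   so the barrier inequality along the flow and membership of q(s) in K_CBF
   are literally the same inequality. *)

Lemma dotvZ (R : realType) (d : nat) (a b : 'rV[R]_d) (c : R) :
  dotv a (c *: b) = dotv a b * c.
Proof. by rewrite /dotv mulr_suml; apply: eq_bigr => i _; rewrite mxE mulrCA mulrC. Qed.

Lemma derive1_H_along_flow (R : realType) (d : nat)
    (H : R -> ('rV[R]_d -> R) -> R)
    (dH : R -> ('rV[R]_d -> R) -> 'rV[R]_d -> R)
    (rho : R -> 'rV[R]_d -> R) (v : 'rV[R]_d -> 'rV[R]_d) (s : R) :
  (forall x, derive1 (fun t => rho t x) s + div (fun y => rho s y *: v y) x = 0) ->
  derive1 (fun t => H t (rho t)) s
    = dsH H s (rho s)
      + intRd (fun x => dH s (rho s) x * derive1 (fun t => rho t x) s) ->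
  intRd (fun x => dH s (rho s) x * - div (fun y => rho s y *: v y) x)
    = intRd (fun x => dotv (grad (dH s (rho s)) x) (rho s x *: v x)) ->
  derive1 (fun t => H t (rho t)) s
    = dsH H s (rho s) + intRd (fun x => dotv (grad (dH s (rho s)) x) (v x) * rho s x).
Proof.
move=> continuity -> ibp; congr (_ + _).
have drho_eq x : derive1 (fun t => rho t x) s = - div (fun y => rho s y *: v y) x.
  by apply/eqP; rewrite -addr_eq0; apply/eqP.
under eq_fun => x do rewrite drho_eq.
by rewrite ibp; congr intRd; apply: funext => x; rewrite dotvZ.
Qed.

Lemma K_CBFE {R : realType} {d m : nat} {U : set 'rV[R]_m}
    {f : R -> 'rV[R]_d -> 'rV[R]_m -> 'rV[R]_d}
    {H : R -> ('rV[R]_d -> R) -> R}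
    {dH : R -> ('rV[R]_d -> R) -> 'rV[R]_d -> R}
    {alpha : R -> R} {s : R} {r : 'rV[R]_d -> R} {p : 'rV[R]_d -> 'rV[R]_m} :
  (forall x, U (p x)) ->
  K_CBF U f H dH alpha s r p
    <-> - alpha (H s r)
        <= dsH H s r + intRd (fun x => dotv (grad (dH s r) x) (f s x (p x)) * r x).
Proof. by move=> pU; split=> [[_ ?] | ?]; [lra | split; last lra]. Qed.

Theorem theorem2 (R : realType) (d m : nat) (U : set 'rV[R]_m)
  (f : R -> 'rV[R]_d -> 'rV[R]_m -> 'rV[R]_d)
  (alpha : R -> R)
  (H : R -> ('rV[R]_d -> R) -> R)
  (dH : R -> ('rV[R]_d -> R) -> 'rV[R]_d -> R)
  (q : R -> 'rV[R]_d -> 'rV[R]_m)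
  (rho : R -> 'rV[R]_d -> R) (rho0 : 'rV[R]_d -> R)
  (* alpha: strictly increasing, smooth, alpha(0) = 0 *)
  (alpha_incr : {mono alpha : x y / x < y})
  (alpha_smooth : forall n x, derivable (iter n (fun g : R -> R => derive1 g) alpha) x 1)
  (alpha0 : alpha 0 = 0)
  (* the policy takes values in U *)
  (qU : forall s x, 0 <= s -> U (q s x))
  (* rho(s,.) is a probability density *)
  (rho_ge0 : forall s x, 0 <= s -> 0 <= rho s x)
  (rho_mass : forall s, 0 <= s -> intRd (rho s) = 1)
  (* continuity equation with initial datum rho0 *)
  (rho_init : rho 0 = rho0)
  (continuity : forall s x, 0 <= s ->
     derive1 (fun t => rho t x) s
       + div (fun y => rho s y *: f s y (q s y)) x = 0)
  (* standing assumption: chain rule for s |-> H(s, rho(s,.)),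
     dH being the Frechet derivative delta_rho H *)
  (chain_rule : forall s, 0 <= s ->
     derivable (fun t => H t (rho t)) s 1 /\
     derive1 (fun t => H t (rho t)) s
       = dsH H s (rho s)
         + intRd (fun x => dH s (rho s) x * derive1 (fun t => rho t x) s))
  (* standing assumption: integration by parts produces no boundary terms *)
  (ibp : forall s, 0 <= s ->
     intRd (fun x => dH s (rho s) x * - div (fun y => rho s y *: f s y (q s y)) x)
       = intRd (fun x => dotv (grad (dH s (rho s)) x)
                              (rho s x *: f s x (q s x)))) :
  (forall s, 0 <= s ->
     derive1 (fun t => H t (rho t)) s >= - alpha (H s (rho s)))
  <->
  (forall s, 0 <= s -> K_CBF U f H dH alpha s (rho s) (q s)).
Proof.
have dH_flow s : 0 <= s -> derive1 (fun t => H t (rho t)) s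
    = dsH H s (rho s)
      + intRd (fun x => dotv (grad (dH s (rho s)) x) (f s x (q s x)) * rho s x).
  move=> s0; apply: (@derive1_H_along_flow _ _ _ _ _ (fun y => f s y (q s y))).
  - by move=> x; exact: continuity.
  - exact: (chain_rule s s0).2.
  - exact: ibp.
have qsU s : 0 <= s -> forall x, U (q s x) by move=> s0 x; exact: qU.
split=> barrier s s0.
- by apply/(K_CBFE (qsU s s0)); rewrite -dH_flow //; exact: barrier.
- by rewrite dH_flow //; apply/(K_CBFE (qsU s s0)); exact: barrier.
Qed.
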